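(* Let $n\ge 5$, $k_1=n-2$, $k_2=k_3=1$, and let $g$ be a left-invariant metric on $\mathrm{SO}(n)$ of form (III) with arbitrary parameters $x_1,x_{12},x_{13},x_{23}>0$. Then its Ricci tensor $r$ at the identity satisfies $r(X,Y)=0$ for all $X\in\mathfrak m_{12}$ and $Y\in\mathfrak m_{13}$.
   Context: Let $n=k_1+k_2+k_3$ with positive integers $k_i$, $\mathfrak{so}(n)$ the Lie algebra of $\mathrm{SO}(n)$, and $B(X,Y)=(n-2)\operatorname{tr}(XY)$ its Killing form. Write $n\times n$ matrices in block form with diagonal blocks of sizes $k_1,k_2,k_3$. Let $\mathfrak m_i=\mathfrak{so}(k_i)$ embedded as the $i$-th diagonal block ($\mathfrak m_i=0$ if $k_i=1$), and for $1\le i<j\le 3$ let $\mathfrak m_{ij}$ be the set of matrices whose only nonzero blocks are an arbitrary $(i,j)$-block $A\in M(k_i,k_j)$ and the $(j,i)$-block $-A^t$. A left-invariant metric of form (III) (used when $k_1=n-2$, $k_2=k_3=1$, so $\mathfrak m_2=\mathfrak m_3=0$) is the one whose value at the identity is $x_1(-B)|_{\mathfrak m_1}+x_{12}(-B)|_{\mathfrak m_{12}}+x_{13}(-B)|_{\mathfrak m_{13}}+x_{23}(-B)|_{\mathfrak m_{23}}$ with the summands mutually orthogonal and all $x$'s positive. (Here $\mathfrak m_{12}$ and $\mathfrak m_{13}$ are equivalent $\mathrm{Ad}(\mathrm{SO}(n-2))$-modules.) The Ricci tensor is that of the Levi-Civita connection, as a bilinear form on $\mathfrak{so}(n)=T_e\mathrm{SO}(n)$.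 *)

(* so(n) realised as skew-symmetric n x n matrices over a real field. *)
From HB Require Import structures.
From mathcomp Require Import all_boot all_order all_algebra.
Set Implicit Arguments. Unset Strict Implicit. Unset Printing Implicit Defensive.
Import Order.TTheory GRing.Theory Num.Theory.
Local Open Scope ring_scope.

(* Block index (0,1,2 for blocks 1,2,3) of a row/column index i, for
   diagonal blocks of sizes k1, k2, k3 = n - k1 - k2. *)
Definition blk (k1 k2 i : nat) : nat :=
  if (i < k1)%N then 0%N else if (i < k1 + k2)%N then 1%N else 2%N.

(* Projection onto the entries lying in the (a,b) and (b,a) blocks.
   For so_mem X: blockproj a a X is the m_{a} component, and for a <> b,
   blockproj a b X is the m_{ab} component. *)
Definition blockproj (R : nzRingType) (n k1 k2 a b : nat) (X : 'M[R]_n) : 'M[R]_n :=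
  \matrix_(i, j)
    if ((blk k1 k2 i == a) && (blk k1 k2 j == b)) ||
       ((blk k1 k2 i == b) && (blk k1 k2 j == a))
    then X i j else 0.

Definition so_mem (R : nzRingType) (n : nat) (X : 'M[R]_n) : Prop := X^T = - X.

Definition lie (R : nzRingType) (n : nat) (X Y : 'M[R]_n) : 'M[R]_n :=
  X *m Y - Y *m X.

Definition killing (R : nzRingType) (n : nat) (X Y : 'M[R]_n) : R :=
  (n - 2)%N%:R * \tr (X *m Y).

Definition metricIII (R : nzRingType) (n : nat) (x1 x12 x13 x23 : R)
    (X Y : 'M[R]_n) : R :=
  let k1 := (n - 2)%N in
  let P a b (Z : 'M[R]_n) := blockproj k1 1 a b Z in
    x1  * - killing (P 0 0 X)%N (P 0 0 Y)%N
  + x12 * - killing (P 0 1 X)%N (P 0 1 Y)%N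
  + x13 * - killing (P 0 2 X)%N (P 0 2 Y)%N
  + x23 * - killing (P 1 2 X)%N (P 1 2 Y)%N.

(* nabla is the Levi-Civita connection of the left-invariant metric g
   (on left-invariant fields, identified with so(n)): it maps so(n) x so(n)
   to so(n) and satisfies the Koszul formula. *)
Definition is_levi_civita (R : nzRingType) (n : nat)
    (g : 'M[R]_n -> 'M[R]_n -> R) (nabla : 'M[R]_n -> 'M[R]_n -> 'M[R]_n) : Prop :=
  forall X Y, so_mem X -> so_mem Y ->
    so_mem (nabla X Y) /\
    forall Z, so_mem Z ->
      2%:R * g (nabla X Y) Z = g (lie X Y) Z - g (lie Y Z) X + g (lie Z X) Y.

Definition curv (R : nzRingType) (n : nat) (nabla : 'M[R]_n -> 'M[R]_n -> 'M[R]_n)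
    (X Y Z : 'M[R]_n) : 'M[R]_n :=
  nabla X (nabla Y Z) - nabla Y (nabla X Z) - nabla (lie X Y) Z.

(* Basis of so(n): e_ij = E_ij - E_ji, i < j; the e_ij-coordinate of a skew A is A i j. *)
Definition skewbasis (R : nzRingType) (n : nat) (i j : 'I_n) : 'M[R]_n :=
  delta_mx i j - delta_mx j i.

(* Ricci tensor: Ric(X,Y) = trace of the linear map Z |-> R(Z,X)Y on so(n),
   computed in the basis (e_ij)_{i<j}. *)
Definition ricci (R : nzRingType) (n : nat) (nabla : 'M[R]_n -> 'M[R]_n -> 'M[R]_n)
    (X Y : 'M[R]_n) : R :=
  \sum_(i : 'I_n) \sum_(j : 'I_n | (i < j)%N)
     (curv nabla (@skewbasis R n i j) X Y) i j.

(* Let D = diag(1, ..., 1, -1). Conjugation by D is a Lie algebra automorphism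
   of so(n) that preserves every block m_1, m_12, m_13, m_23 and the Killing
   form, hence is an isometry of any metric of form (III). By uniqueness of the
   Levi-Civita connection it commutes with the connection and the curvature, so
   the Ricci tensor is invariant under it. It fixes m_12 and negates m_13, so
   for X in m_12 and Y in m_13 we get r(X, Y) = r(DXD, DYD) = -r(X, Y). *)

From HB Require Import structures.
From mathcomp Require Import all_boot all_order all_algebra.
From mathcomp Require Import ring lra zify.
Import Order.TTheory GRing.Theory Num.Theory.
Set Implicit Arguments.
Unset Strict Implicit.
Unset Printing Implicit Defensive.
Local Open Scope ring_scope.

Section SkewMatrices.
Variables (R : comNzRingType) (n : nat).
Local Notation M := 'M[R]_n.

Lemma soD (A B : M) : so_mem A -> so_mem B -> so_mem (A + B).
Proof. by rewrite /so_mem linearD /= => -> ->; rewrite opprD. Qed.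

Lemma soZ (c : R) (A : M) : so_mem A -> so_mem (c *: A).
Proof. by rewrite /so_mem linearZ /= => ->; rewrite scalerN. Qed.

Lemma soN (A : M) : so_mem A -> so_mem (- A).
Proof. by move=> soA; rewrite -scaleN1r; apply: soZ. Qed.

Lemma soB (A B : M) : so_mem A -> so_mem B -> so_mem (A - B).
Proof. by move=> hA hB; apply: soD => //; apply: soN. Qed.

Lemma so_lie (A B : M) : so_mem A -> so_mem B -> so_mem (lie A B).
Proof.
rewrite /so_mem /lie => hA hB; rewrite linearB /= !trmx_mul hA hB.
by rewrite !mulNmx !mulmxN !opprK opprB.
Qed.

Lemma lieZl (c : R) (A B : M) : lie (c *: A) B = c *: lie A B.
Proof. by rewrite /lie -scalemxAl -scalemxAr scalerBr. Qed.

Lemma lieZr (c : R) (A B : M) : lie A (c *: B) = c *: lie A B.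
Proof. by rewrite /lie -scalemxAl -scalemxAr scalerBr. Qed.

Lemma so_skewbasis (i j : 'I_n) : so_mem (skewbasis R i j).
Proof. by rewrite /so_mem /skewbasis linearB /= !trmx_delta opprB. Qed.

Lemma so_blockproj k1 k2 a b (A : M) : so_mem A -> so_mem (blockproj k1 k2 a b A).
Proof.
move=> /matrixP soA; apply/matrixP => i j; rewrite !mxE orbC.
rewrite (andbC (_ j == a)) (andbC (_ j == b)).
by case: ifP => _; [have := soA i j; rewrite !mxE | rewrite oppr0].
Qed.

Lemma blockproj_linear k1 k2 a b (c : R) (A B : M) :
  blockproj k1 k2 a b (c *: A + B) = c *: blockproj k1 k2 a b A + blockproj k1 k2 a b B.
Proof. by apply/matrixP => i j; rewrite !mxE; case: ifP; rewrite ?mulr0 ?addr0. Qed.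

Lemma killing_linear_l (c : R) (A B C : M) :
  killing (c *: A + B) C = c * killing A C + killing B C.
Proof. by rewrite /killing mulmxDl -scalemxAl mxtraceD mxtraceZ mulrDr mulrCA. Qed.

Lemma killingC (A B : M) : killing A B = killing B A.
Proof. by rewrite /killing mxtrace_mulC. Qed.

End SkewMatrices.

Section SignConjugation.
Variables (R : comNzRingType) (n : nat) (s : 'I_n -> R).
Hypothesis s_invol : forall i, s i * s i = 1.
Local Notation M := 'M[R]_n.

(* [D A D] for the diagonal matrix [D] with entries [s i]. *)
Definition sign_conj (A : M) : M := \matrix_(i, j) (s i * s j * A i j).

Lemma sign_conjK : involutive sign_conj.
Proof.
move=> A; apply/matrixP => i j.
by rewrite !mxE mulrA mulrACA !s_invol !mul1r.
Qed.

Lemma sign_conjB (A B : M) : sign_conj (A - B) = sign_conj A - sign_conj B.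
Proof. by apply/matrixP => i j; rewrite !mxE mulrBr. Qed.

Lemma sign_conjM (A B : M) : sign_conj (A *m B) = sign_conj A *m sign_conj B.
Proof.
apply/matrixP => i j; rewrite !mxE big_distrr; apply: eq_bigr => k _.
rewrite !mxE; transitivity (s i * s j * (s k * s k) * (A i k * B k j)).
  by rewrite s_invol mulr1.
by ring.
Qed.

Lemma sign_conj_lie (A B : M) : sign_conj (lie A B) = lie (sign_conj A) (sign_conj B).
Proof. by rewrite /lie sign_conjB !sign_conjM. Qed.

Lemma sign_conj_so (A : M) : so_mem A -> so_mem (sign_conj A).
Proof.
move=> /matrixP soA; apply/matrixP => i j; have := soA i j.
by rewrite !mxE => ->; rewrite mulrN (mulrC (s j)).
Qed.

Lemma mxtrace_sign_conj (A : M) : \tr (sign_conj A) = \tr A.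
Proof. by apply: eq_bigr => i _; rewrite mxE s_invol mul1r. Qed.

Lemma killing_sign_conj (A B : M) : killing (sign_conj A) (sign_conj B) = killing A B.
Proof. by rewrite /killing -sign_conjM mxtrace_sign_conj. Qed.

Lemma blockproj_sign_conj k1 k2 a b (A : M) :
  blockproj k1 k2 a b (sign_conj A) = sign_conj (blockproj k1 k2 a b A).
Proof. by apply/matrixP => i j; rewrite !mxE; case: ifP; rewrite ?mulr0. Qed.

Lemma sign_conj_skewbasis (i j : 'I_n) :
  sign_conj (skewbasis R i j) = (s i * s j) *: skewbasis R i j.
Proof.
apply/matrixP => k l; rewrite !mxE !mulrBr; congr (_ - _).
  by case: (boolP ((k == i) && (l == j))) => [/andP[/eqP-> /eqP->]|_]; rewrite ?mulr0.
case: (boolP ((k == j) && (l == i))) => [/andP[/eqP-> /eqP->]|_]; rewrite ?mulr0 //.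
by rewrite (mulrC (s j)).
Qed.

End SignConjugation.

Definition block_sign {R : nzRingType} {n : nat} (k1 k2 : nat) (w : nat -> R) (i : 'I_n) : R :=
  w (blk k1 k2 i).

Lemma sign_conj_blockproj (R : comNzRingType) (n k1 k2 : nat) (w : nat -> R) (a b : nat)
    (A : 'M[R]_n) :
  sign_conj (block_sign k1 k2 w) (blockproj k1 k2 a b A)
  = (w a * w b) *: blockproj k1 k2 a b A.
Proof.
apply/matrixP => i j; rewrite !mxE /block_sign.
case: ifP => [/orP[/andP[/eqP-> /eqP->]|/andP[/eqP-> /eqP->]]|_]; rewrite ?mulr0 //.
by rewrite (mulrC (w b)).
Qed.

Section LeviCivita.
Variables (R : numFieldType) (n : nat) (g : 'M[R]_n -> 'M[R]_n -> R).
Local Notation M := 'M[R]_n.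
Hypothesis g_linear_l : forall c (A B Z : M), g (c *: A + B) Z = c * g A Z + g B Z.
Hypothesis gC : forall A B : M, g A B = g B A.
Hypothesis g_nondeg : forall W : M, so_mem W -> (forall Z, so_mem Z -> g W Z = 0) -> W = 0.
Variable nabla : M -> M -> M.
Hypothesis nablaLC : is_levi_civita g nabla.

Lemma g0l (Z : M) : g 0 Z = 0.
Proof.
have := g_linear_l 1 0 0 Z; rewrite scaler0 addr0 mul1r => g00.
by apply: (addrI (g 0 Z)); rewrite addr0 -g00.
Qed.

Lemma gZl c (A Z : M) : g (c *: A) Z = c * g A Z.
Proof. by have := g_linear_l c A 0 Z; rewrite addr0 g0l addr0. Qed.

Lemma gZr c (A Z : M) : g Z (c *: A) = c * g Z A.
Proof. by rewrite gC gZl gC. Qed.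

Lemma gBl (A B Z : M) : g (A - B) Z = g A Z - g B Z.
Proof. by rewrite addrC -scaleN1r g_linear_l mulN1r addrC. Qed.

Lemma so_eq_by_metric (A B : M) : so_mem A -> so_mem B ->
  (forall Z, so_mem Z -> g A Z = g B Z) -> A = B.
Proof.
move=> hA hB eqAB; apply/eqP; rewrite -subr_eq0; apply/eqP.
apply: g_nondeg => [|Z soZ]; first exact: soB.
by rewrite gBl eqAB ?subrr.
Qed.

Lemma so_nabla (X Y : M) : so_mem X -> so_mem Y -> so_mem (nabla X Y).
Proof. by move=> soX soY; case: (nablaLC soX soY). Qed.

Lemma koszul (X Y Z : M) : so_mem X -> so_mem Y -> so_mem Z ->
  2%:R * g (nabla X Y) Z = g (lie X Y) Z - g (lie Y Z) X + g (lie Z X) Y.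
Proof. by move=> soX soY; case: (nablaLC soX soY) => _; apply. Qed.

Lemma two_neq0 : 2%:R != 0 :> R.
Proof. by rewrite pnatr_eq0. Qed.

Lemma nablaZl c (X Y : M) : so_mem X -> so_mem Y -> nabla (c *: X) Y = c *: nabla X Y.
Proof.
move=> soX soY; have socX := soZ c soX.
apply: so_eq_by_metric => [||Z soZ']; first exact: so_nabla.
  by apply: soZ; apply: so_nabla.
apply: (mulfI two_neq0); rewrite gZl mulrCA !koszul //.
by rewrite lieZl lieZr !gZl !gZr; ring.
Qed.

Lemma nablaZr c (X Y : M) : so_mem X -> so_mem Y -> nabla X (c *: Y) = c *: nabla X Y.
Proof.
move=> soX soY; have socY := soZ c soY.
apply: so_eq_by_metric => [||Z soZ']; first exact: so_nabla.
  by apply: soZ; apply: so_nabla.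
apply: (mulfI two_neq0); rewrite gZl mulrCA !koszul //.
by rewrite lieZl lieZr !gZl !gZr; ring.
Qed.

Lemma curvZl c (A X Y : M) : so_mem A -> so_mem X -> so_mem Y ->
  curv nabla (c *: A) X Y = c *: curv nabla A X Y.
Proof.
move=> soA soX soY; rewrite /curv lieZl.
rewrite (nablaZl c soA (so_nabla soX soY)) (nablaZl c soA soY).
rewrite (nablaZr c soX (so_nabla soA soY)) (nablaZl c (so_lie soA soX) soY).
by rewrite !scalerBr.
Qed.

Lemma curvZr c (A X Y : M) : so_mem A -> so_mem X -> so_mem Y ->
  curv nabla A X (c *: Y) = c *: curv nabla A X Y.
Proof.
move=> soA soX soY; rewrite /curv (nablaZr c soX soY) (nablaZr c soA soY).
rewrite (nablaZr c soA (so_nabla soX soY)) (nablaZr c soX (so_nabla soA soY)).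
by rewrite (nablaZr c (so_lie soA soX) soY) !scalerBr.
Qed.

Lemma ricciZr c (X Y : M) : so_mem X -> so_mem Y ->
  ricci nabla X (c *: Y) = c * ricci nabla X Y.
Proof.
move=> soX soY; rewrite /ricci mulr_sumr; apply: eq_bigr => i _.
rewrite mulr_sumr; apply: eq_bigr => j _.
by rewrite curvZr ?mxE //; apply: so_skewbasis.
Qed.

Section Automorphism.
Variable f : M -> M.
Hypothesis f_so : forall A, so_mem A -> so_mem (f A).
Hypothesis f_lie : forall A B, f (lie A B) = lie (f A) (f B).
Hypothesis f_isometry : forall A B, g (f A) (f B) = g A B.
Hypothesis fK : involutive f.
Hypothesis fB : forall A B, f (A - B) = f A - f B.

Lemma nabla_auto (X Y : M) : so_mem X -> so_mem Y -> nabla (f X) (f Y) = f (nabla X Y).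
Proof.
move=> soX soY; have [sofX sofY] := (f_so soX, f_so soY).
apply: so_eq_by_metric => [||Z soZ]; [exact: so_nabla | exact/f_so/so_nabla |].
have sofZ := f_so soZ; apply: (mulfI two_neq0).
rewrite -[Z]fK (koszul sofX sofY (f_so sofZ)) -!f_lie !f_isometry.
by rewrite (koszul soX soY sofZ).
Qed.

Lemma curv_auto (A X Y : M) : so_mem A -> so_mem X -> so_mem Y ->
  curv nabla (f A) (f X) (f Y) = f (curv nabla A X Y).
Proof.
move=> soA soX soY; rewrite /curv !fB -f_lie.
rewrite (nabla_auto soX soY) (nabla_auto soA soY) (nabla_auto (so_lie soA soX) soY).
by rewrite (nabla_auto soA (so_nabla soX soY)) (nabla_auto soX (so_nabla soA soY)).
Qed.

End Automorphism.

Variable s : 'I_n -> R.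
Hypothesis s_invol : forall i, s i * s i = 1.
Hypothesis g_sign_conj : forall A B, g (sign_conj s A) (sign_conj s B) = g A B.

Lemma ricci_sign_conj (X Y : M) : so_mem X -> so_mem Y ->
  ricci nabla (sign_conj s X) (sign_conj s Y) = ricci nabla X Y.
Proof.
move=> soX soY; rewrite /ricci; apply: eq_bigr => i _; apply: eq_bigr => j _.
have sq1 : s i * s j * (s i * s j) = 1 by rewrite mulrACA !s_invol mulr1.
have soE := so_skewbasis R i j.
have unsign : skewbasis R i j = (s i * s j) *: sign_conj s (skewbasis R i j).
  by rewrite sign_conj_skewbasis // scalerA sq1 scale1r.
rewrite {1}unsign curvZl; try exact: sign_conj_so.
transitivity (((s i * s j) *: sign_conj s (curv nabla (skewbasis R i j) X Y)) i j).
  congr (fun_of_matrix (_ *: _) i j).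
  exact: (curv_auto (@sign_conj_so _ _ s) (sign_conj_lie s_invol) g_sign_conj
            (sign_conjK s_invol) (sign_conjB s) soE soX soY).
by rewrite !mxE mulrA sq1 mul1r.
Qed.

End LeviCivita.

Section MetricIII.
Variables (R : comNzRingType) (n : nat) (x1 x12 x13 x23 : R).
Local Notation M := 'M[R]_n.
Local Notation g := (metricIII x1 x12 x13 x23).

Lemma metricIII_linear_l c (A B Z : M) : g (c *: A + B) Z = c * g A Z + g B Z.
Proof. rewrite /metricIII /= !blockproj_linear !killing_linear_l; ring. Qed.

Lemma metricIIIC (A B : M) : g A B = g B A.
Proof. by rewrite /metricIII /= !(killingC (blockproj _ _ _ _ B)). Qed.

Lemma metricIII_sign_conj (s : 'I_n -> R) : (forall i, s i * s i = 1) ->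
  forall A B : M, g (sign_conj s A) (sign_conj s B) = g A B.
Proof.
by move=> s_invol A B; rewrite /metricIII /= !blockproj_sign_conj !killing_sign_conj.
Qed.

End MetricIII.

Section PositiveDefinite.
Variables (R : realDomainType) (n : nat).
Local Notation M := 'M[R]_n.

Definition mxsqnorm (A : M) : R := \sum_i \sum_j A i j ^+ 2.

Lemma mxsqnorm_ge0 (A : M) : 0 <= mxsqnorm A.
Proof. by apply: sumr_ge0 => i _; apply: sumr_ge0 => j _; apply: sqr_ge0. Qed.

Lemma mxsqnorm_eq0 (A : M) : mxsqnorm A = 0 -> A = 0.
Proof.
have row_ge0 i : 0 <= \sum_j A i j ^+ 2 by apply: sumr_ge0 => j _; apply: sqr_ge0.
move=> /(psumr_eq0P (fun i _ => row_ge0 i)) A0; apply/matrixP => i j; rewrite mxE.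
have /psumr_eq0P Ai0 := A0 i isT.
by apply/eqP; rewrite -sqrf_eq0 Ai0 // => k _; apply: sqr_ge0.
Qed.

Lemma killing_skew_self (P : M) : so_mem P -> killing P P = - ((n - 2)%:R * mxsqnorm P).
Proof.
move=> /matrixP soP; rewrite /killing /mxtrace /mxsqnorm -mulrN -sumrN; congr (_ * _).
apply: eq_bigr => i _; rewrite mxE -sumrN; apply: eq_bigr => j _.
by have := soP i j; rewrite !mxE => ->; rewrite mulrN expr2.
Qed.

End PositiveDefinite.

Lemma blk_lt3 (k1 k2 i : nat) : (blk k1 k2 i < 3)%N.
Proof. by rewrite /blk; case: ifP => // _; case: ifP. Qed.

Lemma blk_singleton (n : nat) (i j : 'I_n) :
  blk (n - 2) 1 i = blk (n - 2) 1 j -> blk (n - 2) 1 i != 0%N -> i = j.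
Proof.
move: (ltn_ord i) (ltn_ord j); rewrite /blk.
case: (ltnP i (n - 2)) => h1; case: (ltnP j (n - 2)) => h2 //;
case: (ltnP i (n - 2 + 1)) => h3; case: (ltnP j (n - 2 + 1)) => h4 //= ? ? _ _;
apply/val_inj => /=; lia.
Qed.

Lemma so_diag_eq0 (R : numDomainType) (n : nat) (W : 'M[R]_n) i :
  so_mem W -> W i i = 0.
Proof.
move=> /matrixP /(_ i i); rewrite !mxE => /eqP.
by rewrite -addr_eq0 -mulr2n mulrn_eq0 => /eqP.
Qed.

(* The 1 x 1 diagonal blocks of a skew matrix vanish, so the four components
   of form (III) exhaust so(n). *)
Lemma so_blockproj_decomp (R : numDomainType) (n : nat) (W : 'M[R]_n) :
  so_mem W ->
  W = blockproj (n - 2) 1 0 0 W + blockproj (n - 2) 1 0 1 W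
    + blockproj (n - 2) 1 0 2 W + blockproj (n - 2) 1 1 2 W.
Proof.
move=> soW; apply/matrixP => i j; rewrite !mxE.
have := blk_lt3 (n - 2) 1 i; have := blk_lt3 (n - 2) 1 j.
case Hi: (blk _ _ i) => [|[|[|?]]] //; case Hj: (blk _ _ j) => [|[|[|?]]] //= _ _;
  rewrite ?addr0 ?add0r //;
  by rewrite (@blk_singleton n i j) ?Hi ?Hj ?(so_diag_eq0 _ soW) ?addr0.
Qed.

Lemma metricIII_anisotropic (R : realDomainType) (n : nat) (x1 x12 x13 x23 : R) :
  (2 < n)%N -> 0 < x1 -> 0 < x12 -> 0 < x13 -> 0 < x23 ->
  forall W : 'M[R]_n, so_mem W -> metricIII x1 x12 x13 x23 W W = 0 -> W = 0.
Proof.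
move=> n_gt2 hx1 hx12 hx13 hx23 W soW.
have k_gt0 : 0 < (n - 2)%:R :> R by rewrite ltr0n subn_gt0.
have term_ge0 x (P : 'M[R]_n) : 0 < x -> 0 <= x * ((n - 2)%:R * mxsqnorm P).
  by move=> x_gt0; rewrite !mulr_ge0 ?mxsqnorm_ge0 ?ltW.
have term_eq0 x (P : 'M[R]_n) : 0 < x -> x * ((n - 2)%:R * mxsqnorm P) = 0 -> P = 0.
  move=> x_gt0 /eqP; rewrite !mulf_eq0 (gt_eqF x_gt0) (gt_eqF k_gt0) /=.
  by move=> /eqP /mxsqnorm_eq0.
rewrite /metricIII /= !killing_skew_self; try exact: so_blockproj.
rewrite !opprK.
set P00 := blockproj _ _ 0 0 W; set P01 := blockproj _ _ 0 1 W.
set P02 := blockproj _ _ 0 2 W; set P12 := blockproj _ _ 1 2 W.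
move=> g0.
have t00 := term_ge0 _ P00 hx1; have t01 := term_ge0 _ P01 hx12.
have t02 := term_ge0 _ P02 hx13; have t12 := term_ge0 _ P12 hx23.
have e00 : P00 = 0 by apply: (term_eq0 _ _ hx1); lra.
have e01 : P01 = 0 by apply: (term_eq0 _ _ hx12); lra.
have e02 : P02 = 0 by apply: (term_eq0 _ _ hx13); lra.
have e12 : P12 = 0 by apply: (term_eq0 _ _ hx23); lra.
by rewrite (so_blockproj_decomp soW) -/P00 -/P01 -/P02 -/P12 e00 e01 e02 e12 !addr0.
Qed.

Lemma metricIII_nondeg (R : realDomainType) (n : nat) (x1 x12 x13 x23 : R) :
  (2 < n)%N -> 0 < x1 -> 0 < x12 -> 0 < x13 -> 0 < x23 ->
  forall W : 'M[R]_n, so_mem W ->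
    (forall Z, so_mem Z -> metricIII x1 x12 x13 x23 W Z = 0) -> W = 0.
Proof.
move=> n_gt2 hx1 hx12 hx13 hx23 W soW W0.
exact: (metricIII_anisotropic n_gt2 hx1 hx12 hx13 hx23 soW (W0 W soW)).
Qed.

Theorem lemma7p1 (R : realFieldType) (n : nat) (hn : (5 <= n)%N)
    (x1 x12 x13 x23 : R)
    (hx1 : 0 < x1) (hx12 : 0 < x12) (hx13 : 0 < x13) (hx23 : 0 < x23)
    (nabla : 'M[R]_n -> 'M[R]_n -> 'M[R]_n)
    (hLC : is_levi_civita (metricIII x1 x12 x13 x23) nabla) :
  forall X Y : 'M[R]_n,
    so_mem X -> X = blockproj (n - 2)%N 1 0 1 X ->
    so_mem Y -> Y = blockproj (n - 2)%N 1 0 2 Y ->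
    ricci nabla X Y = 0.
Proof.
move=> X Y soX eX soY eY.
have g_linear_l := @metricIII_linear_l _ n x1 x12 x13 x23.
have gC := @metricIIIC _ n x1 x12 x13 x23.
have g_nondeg := metricIII_nondeg (leq_trans (isT : (2 < 5)%N) hn) hx1 hx12 hx13 hx23.
pose w (a : nat) : R := if a == 2%N then -1 else 1.
pose s : 'I_n -> R := block_sign (n - 2) 1 w.
have s_invol i : s i * s i = 1 by rewrite /s /block_sign /w; case: ifP; rewrite ?mulrNN mulr1.
have sX : sign_conj s X = X by rewrite eX sign_conj_blockproj /w /= mulr1 scale1r.
have sY : sign_conj s Y = -1 *: Y by rewrite eY sign_conj_blockproj /w /= mul1r.
have := ricci_sign_conj g_linear_l gC g_nondeg hLC s_invol
  (metricIII_sign_conj x1 x12 x13 x23 s_invol) soX soY.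
by rewrite sX sY (ricciZr g_linear_l gC g_nondeg hLC) // => r_eq; lra.
Qed.
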